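(* The variety $\mathcal{WHB}$ of WHB-algebras, and hence each of its subvarieties, has the congruence extension property: whenever $\mathbf A$ is a subalgebra of a WHB-algebra $\mathbf B$ (in the variety in question) and $\delta$ is a congruence of $\mathbf A$, there is a congruence $\theta$ of $\mathbf B$ with $\delta=\theta\cap A^2$.
   Context: A WHB-algebra is an algebra $(A,\wedge,\vee,\to,\leftarrow,0,1)$ such that $(A,\wedge,\vee,0,1)$ is a bounded distributive lattice and for all $a,b,c\in A$: $a\to a=1$; $a\to(b\wedge c)=(a\to b)\wedge(a\to c)$; $(a\vee b)\to c=(a\to c)\wedge(b\to c)$; $(a\to b)\wedge(b\to c)\le a\to c$; $a\leftarrow a=0$; $(a\vee b)\leftarrow c=(a\leftarrow c)\vee(b\leftarrow c)$; $a\leftarrow(b\wedge c)=(a\leftarrow b)\vee(a\leftarrow c)$; $a\leftarrow c\le(a\leftarrow b)\vee(b\leftarrow c)$; $a\wedge((a\to b)\leftarrow 0)\le b$; $a\le b\vee(1\to(a\leftarrow b))$. *)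

Record WHB_algebra : Type := {
  car :> Type;
  meet : car -> car -> car;
  join : car -> car -> car;
  imp : car -> car -> car;
  coimp : car -> car -> car;
  zero : car;
  one : car;
  meetA : forall a b c, meet a (meet b c) = meet (meet a b) c;
  joinA : forall a b c, join a (join b c) = join (join a b) c;
  meetC : forall a b, meet a b = meet b a;
  joinC : forall a b, join a b = join b a;
  meet_absorb : forall a b, meet a (join a b) = a;
  join_absorb : forall a b, join a (meet a b) = a;
  meet_distr : forall a b c, meet a (join b c) = join (meet a b) (meet a c);
  join0 : forall a, join zero a = a;
  meet1 : forall a, meet one a = a;
  imp_refl : forall a, imp a a = one;
  imp_meet : forall a b c, imp a (meet b c) = meet (imp a b) (imp a c);
  imp_join : forall a b c, imp (join a b) c = meet (imp a c) (imp b c);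
  imp_trans : forall a b c,
      meet (meet (imp a b) (imp b c)) (imp a c) = meet (imp a b) (imp b c);
  coimp_refl : forall a, coimp a a = zero;
  coimp_join : forall a b c, coimp (join a b) c = join (coimp a c) (coimp b c);
  coimp_meet : forall a b c, coimp a (meet b c) = join (coimp a b) (coimp a c);
  coimp_trans : forall a b c,
      meet (coimp a c) (join (coimp a b) (coimp b c)) = coimp a c;
  ax_imp_coimp : forall a b,
      meet (meet a (coimp (imp a b) zero)) b = meet a (coimp (imp a b) zero);
  ax_coimp_imp : forall a b,
      meet a (join b (imp one (coimp a b))) = a
}.

Definition le (B : WHB_algebra) (x y : B) : Prop := meet B x y = x.

Definition is_subalgebra (B : WHB_algebra) (S : B -> Prop) : Prop :=
  S (zero B) /\ S (one B) /\
  (forall x y, S x -> S y ->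
     S (meet B x y) /\ S (join B x y) /\ S (imp B x y) /\ S (coimp B x y)).

Definition is_congruence_on (B : WHB_algebra) (S : B -> Prop)
    (d : B -> B -> Prop) : Prop :=
  (forall x y, d x y -> S x /\ S y) /\
  (forall x, S x -> d x x) /\
  (forall x y, d x y -> d y x) /\
  (forall x y z, d x y -> d y z -> d x z) /\
  (forall x x' y y', d x x' -> d y y' ->
     d (meet B x y) (meet B x' y') /\ d (join B x y) (join B x' y') /\
     d (imp B x y) (imp B x' y') /\ d (coimp B x y) (coimp B x' y')).

Definition is_congruence (B : WHB_algebra) (t : B -> B -> Prop) : Prop :=
  is_congruence_on B (fun _ => True) t.

(* The extension of [d] is the relation "no [d]-saturated prime filter
   separates x and y", where a prime filter of B is [d]-saturated when it is a
   union of [d]-classes on S.  It respects meets and joins because prime filters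
   are prime.  For [imp] one uses the relational semantics: if [imp x y] is not
   in P, a maximality argument yields a prime filter Q containing x but not y
   and closed under "c in Q and [imp c e] in P imply e in Q"; such a Q is
   saturated whenever P is, because [d u v] forces [d (imp u v) one].  The case
   of [coimp] is dual.  On S the extension is exactly [d]: if [meet a b] is not
   [d]-related to a, a prime filter of the quotient lattice S/d separating a
   from b extends to a prime filter of B, which is then saturated. *)

From Stdlib Require Import Classical.
From mathcomp Require Import ssreflect ssrbool classical_sets.
(* Imported last, so that [zero] and [one] denote the WHB constants. *)

Local Open Scope classical_set_scope.

Local Arguments meet {_} _ _.
Local Arguments join {_} _ _.
Local Arguments imp {_} _ _.
Local Arguments coimp {_} _ _.
Local Arguments zero {_}.
Local Arguments one {_}.
Local Arguments le {B} _ _.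

Section Lattice.
Context {B : WHB_algebra}.
Implicit Types x y z : B.

Lemma meetxx x : meet x x = x.
Proof. by rewrite -{2}(join_absorb B x x) meet_absorb. Qed.

Lemma le_joinE x y : le x y <-> join x y = y.
Proof.
split=> H; first by rewrite -H joinC meetC join_absorb.
by rewrite /le -H meet_absorb.
Qed.

Lemma le_refl x : le x x. Proof. exact: meetxx. Qed.

Lemma le_trans {x y z} : le x y -> le y z -> le x z.
Proof. by rewrite /le => xy yz; rewrite -xy -meetA yz. Qed.

Lemma le_anti {x y} : le x y -> le y x -> x = y.
Proof. by rewrite /le => xy yx; rewrite -xy meetC yx. Qed.

Lemma leIl x y : le (meet x y) x.
Proof. by rewrite /le (meetC _ x y) -meetA meetxx. Qed.

Lemma leIr x y : le (meet x y) y.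
Proof. by rewrite /le -meetA meetxx. Qed.

Lemma lexI x y z : le z x -> le z y -> le z (meet x y).
Proof. by rewrite /le => zx zy; rewrite meetA zx zy. Qed.

Lemma leUl x y : le x (join x y). Proof. exact: meet_absorb. Qed.

Lemma leUr x y : le y (join x y). Proof. by rewrite joinC; exact: meet_absorb. Qed.

Lemma leUx x y z : le x z -> le y z -> le (join x y) z.
Proof. by rewrite !le_joinE => xz yz; rewrite -joinA yz xz. Qed.

Lemma le0x x : le zero x. Proof. by apply/le_joinE; exact: join0. Qed.

Lemma lex1 x : le x one. Proof. by rewrite /le meetC meet1. Qed.

Lemma leIxl x y z : le x z -> le (meet x y) z.
Proof. exact/le_trans/leIl. Qed.

Lemma leIxr x y z : le y z -> le (meet x y) z.
Proof. exact/le_trans/leIr. Qed.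

Lemma lexUl x y z : le z x -> le z (join x y).
Proof. by move=> zx; apply: le_trans zx (leUl _ _). Qed.

Lemma lexUr x y z : le z y -> le z (join x y).
Proof. by move=> zy; apply: le_trans zy (leUr _ _). Qed.

End Lattice.

Ltac lat := first [ apply: le_refl | apply: le0x | apply: lex1 | assumption
  | apply: lexI; lat | apply: leUx; lat
  | apply: leIxl; lat | apply: leIxr; lat
  | apply: lexUl; lat | apply: lexUr; lat ].

Ltac lat_eq := apply: le_anti; lat.

Section Monotonicity.
Context {B : WHB_algebra}.
Implicit Types x y z : B.

Lemma leI2 x x' y y' : le x x' -> le y y' -> le (meet x y) (meet x' y').
Proof. by move=> *; lat. Qed.

Lemma leU2 x x' y y' : le x x' -> le y y' -> le (join x y) (join x' y').
Proof. by move=> *; lat. Qed.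

Lemma imp_monor x y y' : le y y' -> le (imp x y) (imp x y').
Proof. by rewrite /le -imp_meet => ->. Qed.

Lemma imp_antil x x' y : le x x' -> le (imp x' y) (imp x y).
Proof. by move/le_joinE <-; rewrite imp_join; exact: leIl. Qed.

Lemma imp_eq1 x y : le x y -> imp x y = one.
Proof.
by move=> xy; apply: (le_anti (lex1 _)); rewrite -(imp_refl B x); exact: imp_monor.
Qed.

Lemma coimp_monol x x' y : le x x' -> le (coimp x y) (coimp x' y).
Proof. by move/le_joinE <-; rewrite coimp_join; exact: leUl. Qed.

Lemma coimp_antir x y y' : le y y' -> le (coimp x y') (coimp x y).
Proof. by rewrite /le => <-; rewrite coimp_meet; exact: leUr. Qed.

Lemma coimp_eq0 x y : le x y -> coimp x y = zero.
Proof.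
by move=> xy; apply: le_anti (le0x _); rewrite -(coimp_refl B y); exact: coimp_monol.
Qed.

End Monotonicity.

Lemma exists_maximal_above {T : Type} (Good : set (set T)) (G0 : set T) :
  Good G0 ->
  (forall C, C `<=` Good -> total_on C subset -> C !=set0 ->
     Good (\bigcup_(X in C) X)) ->
  exists M, [/\ G0 `<=` M, Good M & forall N, Good N -> M `<=` N -> N `<=` M].
Proof.
move=> GoodG0 Good_bigcup.
(* Working with [G0 `|` X] disposes of the empty chain, whose union is [set0]. *)
case: (Zorn_bigcup (P := fun X => Good (G0 `|` X))) => [F FGood Ftot|A [GoodA Amax]].
  have [[X FX]|F0] := classic (F !=set0); last first.
    by rewrite bigcup0 ?setU0// => X FX; case: F0; exists X.
  rewrite -bigcupUr; last by exists X.
  rewrite -(bigcup_image F (setU G0) id); apply: Good_bigcup.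
  - by move=> _ [Y FY <-]; exact: FGood.
  - move=> _ _ [Y FY <-] [Z FZ <-].
    by have [YZ|ZY] := Ftot Y Z FY FZ; [left|right]; exact: setUS.
  - by exists (G0 `|` X), X.
exists (G0 `|` A); split => // N GoodN AN.
apply: NNPP => NA; apply: (Amax N).
  split=> [t At|NsubA]; first by apply: AN; right.
  by apply: NA => t /NsubA At; right.
by rewrite setUidr // => t G0t; apply: AN; left.
Qed.

Definition disjoint {T : Type} (X Y : set T) := forall t, X t -> Y t -> False.

Section RelativePrimeFilters.
Context {B : WHB_algebra}.
Variables (S : B -> Prop) (leS : B -> B -> Prop).

Definition rel_filter (G : B -> Prop) :=
  [/\ forall u, G u -> S u,
      forall u v, G u -> S v -> leS u v -> G v
    & forall u v, G u -> G v -> G (meet u v)].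

Definition rel_ideal (I : B -> Prop) :=
  [/\ forall u, I u -> S u,
      forall u v, S u -> leS u v -> I v -> I u
    & forall u v, I u -> I v -> I (join u v)].

Definition rel_prime (G : B -> Prop) :=
  forall u v, S u -> S v -> G (join u v) -> G u \/ G v.

Definition maximal_avoiding (I M : B -> Prop) :=
  [/\ rel_filter M, disjoint M I
    & forall G, rel_filter G -> M `<=` G -> disjoint G I -> G `<=` M].

Hypothesis S_meet : forall u v, S u -> S v -> S (meet u v).
Hypothesis S_join : forall u v, S u -> S v -> S (join u v).
Hypothesis le_leS : forall u v, S u -> S v -> le u v -> leS u v.
Hypothesis leS_trans : forall {u v w}, leS u v -> leS v w -> leS u w.
Hypothesis leS_meet :
  forall {u u' v v'}, leS u u' -> leS v v' -> leS (meet u v) (meet u' v').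
Hypothesis leS_join :
  forall {u u' v v'}, leS u u' -> leS v v' -> leS (join u v) (join u' v').

Lemma exists_maximal_avoiding F I :
  rel_filter F -> disjoint F I -> exists M, F `<=` M /\ maximal_avoiding I M.
Proof.
move=> HF FI.
have [|M [FM [HM MI] Mmax]] :=
  exists_maximal_above (fun G => rel_filter G /\ disjoint G I) F (conj HF FI) _.
  move=> C CGood Ctot _; split; last first.
    by move=> t [X CX Xt]; have [_ XI] := CGood X CX; exact: XI Xt.
  split.
  - by move=> u [X CX Xu]; have [[XS _ _] _] := CGood X CX; exact: XS.
  - move=> u v [X CX Xu] Sv uv; exists X => //.
    by have [[_ Xup _] _] := CGood X CX; exact: Xup Sv uv.
  - move=> u v [X CX Xu] [Y CY Yv].
    have [XY|YX] := Ctot X Y CX CY.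
      by exists Y => //; have [[_ _ Ymeet] _] := CGood Y CY; exact: Ymeet (XY _ Xu) Yv.
    by exists X => //; have [[_ _ Xmeet] _] := CGood X CX; exact: Xmeet Xu (YX _ Yv).
by exists M; split => //; split => // G HG MG GI; apply: Mmax.
Qed.

Lemma maximal_avoiding_prime I M : rel_ideal I -> maximal_avoiding I M -> rel_prime M.
Proof.
case=> IS Idown Ijoin [[MS Mup Mmeet] MI Mmax] u v Su Sv Muv.
(* By maximality, the filter generated by [M] and any [w] outside [M] meets [I]. *)
have escape w : S w -> ~ M w -> exists m i, [/\ M m, I i & leS (meet m w) i].
  move=> Sw nMw; apply: NNPP => none; apply: nMw.
  pose Mw z := S z /\ exists m, M m /\ leS (meet m w) z.
  have MSw m : M m -> S (meet m w) by move=> Mm; apply: S_meet (MS m Mm) Sw.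
  apply: (Mmax Mw).
  - split; first by move=> z [].
    + move=> z z' [_ [m [Mm mz]]] Sz' zz'; split => //; exists m.
      by split => //; exact: leS_trans mz zz'.
    + move=> z z' [Sz [m [Mm mz]]] [Sz' [m' [Mm' mz']]].
      split; first exact: S_meet.
      exists (meet m m'); split; first exact: Mmeet.
      apply: leS_trans (leS_meet mz mz'); apply: le_leS.
      * by apply: MSw; exact: Mmeet.
      * by apply: S_meet; exact: MSw.
      * by lat.
  - move=> z Mz; split; first exact: MS.
    by exists z; split => //; apply: le_leS => //; [exact: MSw|exact: MS|lat].
  - by move=> z [Sz [m [Mm mz]]] Iz; apply: none; exists m, z.
  - split => //; exists (join u v); split => //.
    by apply: le_leS => //; [exact: MSw|lat].
have [Mu|nMu] := classic (M u); first by left.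
have [Mv|nMv] := classic (M v); first by right.
have [m1 [i1 [Mm1 Ii1 le1]]] := escape u Su nMu.
have [m2 [i2 [Mm2 Ii2 le2]]] := escape v Sv nMv.
pose m := meet (meet m1 m2) (join u v).
have Mm : M m := Mmeet _ _ (Mmeet _ _ Mm1 Mm2) Muv.
have Sm : S m := MS m Mm.
apply: False_ind (MI m Mm _); apply: (Idown m (join i1 i2) Sm); last exact: Ijoin.
apply: leS_trans (leS_join le1 le2); apply: le_leS => //.
  by apply: S_join; apply: S_meet => //; exact: MS.
by rewrite /m meet_distr; lat.
Qed.

End RelativePrimeFilters.

Arguments exists_maximal_avoiding {B S leS F I}.
Arguments maximal_avoiding_prime {B S leS} _ _ _ _ _ _ {I M}.

Section PrimeFilters.
Context {B : WHB_algebra}.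
Implicit Types (x y : B) (P Q F G I : B -> Prop).

Definition filter G :=
  (forall u v, G u -> le u v -> G v) /\ (forall u v, G u -> G v -> G (meet u v)).

Definition ideal I :=
  (forall u v, le u v -> I v -> I u) /\ (forall u v, I u -> I v -> I (join u v)).

Definition prime_filter P :=
  [/\ filter P, P one, ~ P zero & forall u v, P (join u v) -> P u \/ P v].

Lemma rel_filter_total G : rel_filter (fun _ => True) le G <-> filter G.
Proof.
split=> [[_ Gup Gmeet]|[Gup Gmeet]]; split => // u v Gu; first exact: Gup.
by move=> _; exact: Gup.
Qed.

Lemma prime_filter_theorem F I :
  filter F -> ideal I -> F one -> I zero -> disjoint F I ->
  exists P, [/\ prime_filter P, F `<=` P, disjoint P I
    & forall G, filter G -> P `<=` G -> disjoint G I -> G `<=` P].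
Proof.
move=> /rel_filter_total HF [Idown Ijoin] F1 I0 FI.
have HI : rel_ideal (fun _ => True) le I by split => // u v _; exact: Idown.
have [P [FP HP]] := exists_maximal_avoiding HF FI.
have Pprime := maximal_avoiding_prime (fun _ _ _ _ => Logic.I) (fun _ _ _ _ => Logic.I)
  (fun u v _ _ uv => uv) (@le_trans B) (@leI2 B) (@leU2 B) HI HP.
case: HP => /rel_filter_total HP PI Pmax; exists P; split => //.
- split => //; first exact: FP.
  + by move=> P0; apply: PI P0 I0.
  + by move=> u v; exact: Pprime.
- by move=> G /rel_filter_total; exact: Pmax.
Qed.

Lemma prime_filterIE P x y : prime_filter P -> P (meet x y) <-> P x /\ P y.
Proof.
case=> [[Pup Pmeet] _ _ _]; split => [Pxy|[Px Py]]; last exact: Pmeet.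
by split; apply: Pup Pxy _; lat.
Qed.

Lemma prime_filterUE P x y : prime_filter P -> P (join x y) <-> P x \/ P y.
Proof.
case=> [[Pup _] _ _ Pjoin]; split => [|[Px|Py]]; first exact: Pjoin.
  by apply: Pup Px _; lat.
by apply: Pup Py _; lat.
Qed.

Definition imp_succ P Q := forall c e, P (imp c e) -> Q c -> Q e.

Definition coimp_succ P Q := forall c e, Q c -> ~ P (coimp c e) -> Q e.

Lemma imp_succ_witness {P x y} :
  prime_filter P -> ~ P (imp x y) ->
  exists Q, [/\ prime_filter Q, imp_succ P Q, Q x & ~ Q y].
Proof.
case=> [[Pup Pmeet] P1 _ _] nPxy.
have Pimp_trans c e z : P (imp c e) -> P (imp e z) -> P (imp c z).
  by move=> Pce Pez; apply: Pup (Pmeet _ _ Pce Pez) _; exact: imp_trans.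
have [|||||Q [HQ FQ QI Qmax]] :=
  prime_filter_theorem (fun e => P (imp x e)) (fun e => P (imp e y)).
- split=> [u v Pu uv|u v Pu Pv]; first by apply: Pup Pu _; exact: imp_monor.
  by rewrite imp_meet; exact: Pmeet.
- split=> [u v uv Pv|u v Pu Pv]; first by apply: Pup Pv _; exact: imp_antil.
  by rewrite imp_join; exact: Pmeet.
- by rewrite imp_eq1 //; lat.
- by rewrite imp_eq1 //; lat.
- by move=> e Pxe Pey; apply: nPxy; exact: Pimp_trans Pxe Pey.
exists Q; split => //; last by move=> Qy; apply: QI Qy _; rewrite imp_refl.
  (* [Q] is maximal, so it already contains its own [imp_succ P]-image. *)
  move=> c e Pce Qc; apply: (Qmax (fun z => exists2 q, Q q & P (imp q z))).
  - case: HQ => [[_ Qmeet] _ _ _]; split.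
      move=> u v [q Qq Pqu] uv; exists q => //; apply: Pup Pqu _; exact: imp_monor.
    move=> u v [q Qq Pqu] [q' Qq' Pq'v]; exists (meet q q'); first exact: Qmeet.
    by rewrite imp_meet; apply: Pmeet; [apply: Pup Pqu _|apply: Pup Pq'v _];
      apply: imp_antil; lat.
  - by move=> q Qq; exists q; rewrite ?imp_refl.
  - by move=> z [q Qq Pqz] Pzy; apply: QI Qq _; exact: Pimp_trans Pqz Pzy.
  - by exists c.
by apply: FQ; rewrite imp_refl.
Qed.

Lemma coimp_succ_witness {P x y} :
  prime_filter P -> P (coimp x y) ->
  exists Q, [/\ prime_filter Q, coimp_succ P Q, Q x & ~ Q y].
Proof.
move=> HP Pxy; case: (HP) => [[Pup _] _ P0 _].
have nPdown u v : le u v -> ~ P v -> ~ P u.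
  by move=> uv nPv Pu; apply: nPv; exact: Pup Pu uv.
have nPjoin u v : ~ P u -> ~ P v -> ~ P (join u v).
  by move=> nPu nPv; rewrite prime_filterUE //; case.
have nPcoimp_trans c e z : ~ P (coimp c e) -> ~ P (coimp e z) -> ~ P (coimp c z).
  by move=> nPce nPez; apply: nPdown (nPjoin _ _ nPce nPez); exact: coimp_trans.
have [|||||Q [HQ FQ QI Qmax]] := prime_filter_theorem
  (fun e => ~ P (coimp x e)) (fun e => ~ P (coimp e y)).
- split=> [u v nPu uv|u v nPu nPv]; first by apply: nPdown nPu; exact: coimp_antir.
  by rewrite coimp_meet; exact: nPjoin.
- split=> [u v uv nPv|u v nPu nPv]; first by apply: nPdown nPv; exact: coimp_monol.
  by rewrite coimp_join; exact: nPjoin.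
- by rewrite coimp_eq0 //; lat.
- by rewrite coimp_eq0 //; lat.
- by move=> e nPxe nPey; exact: nPcoimp_trans nPxe nPey Pxy.
exists Q; split => //; last by move=> Qy; apply: QI Qy _; rewrite coimp_refl.
  move=> c e Qc nPce; apply: (Qmax (fun z => exists2 q, Q q & ~ P (coimp q z))).
  - case: HQ => [[_ Qmeet] _ _ _]; split.
      move=> u v [q Qq nPqu] uv; exists q => //; apply: nPdown nPqu.
      exact: coimp_antir.
    move=> u v [q Qq nPqu] [q' Qq' nPq'v]; exists (meet q q'); first exact: Qmeet.
    by rewrite coimp_meet; apply: nPjoin; [apply: nPdown nPqu|apply: nPdown nPq'v];
      apply: coimp_monol; lat.
  - by move=> q Qq; exists q; rewrite ?coimp_refl.
  - by move=> z [q Qq nPqz] nPzy; apply: QI Qq _; exact: nPcoimp_trans nPqz nPzy.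
  - by exists c.
by apply: FQ; rewrite coimp_refl.
Qed.

Lemma prime_filter_extension (S Q : B -> Prop) :
  S zero -> (forall u v, S u -> S v -> S (join u v)) ->
  rel_filter S le Q -> rel_prime S Q -> Q one -> ~ Q zero ->
  exists P, prime_filter P /\ forall s, S s -> P s <-> Q s.
Proof.
move=> S0 S_join [QS Qup Qmeet] Qprime Q1 nQ0.
have [|||||P [HP QP PI _]] := prime_filter_theorem
  (fun z => exists2 q, Q q & le q z) (fun z => exists s, [/\ S s, ~ Q s & le z s]).
- split=> [u v [q Qq qu] uv|u v [q Qq qu] [q' Qq' q'v]].
    by exists q => //; exact: le_trans uv.
  by exists (meet q q'); [exact: Qmeet|lat].
- split=> [u v uv [s [Ss nQs vs]]|u v [s [Ss nQs us]] [s' [Ss' nQs' vs']]].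
    by exists s; split => //; exact: le_trans vs.
  exists (join s s'); split; [exact: S_join| |lat].
  by move=> /(Qprime _ _ Ss Ss') [/nQs|/nQs'].
- by exists one => //; lat.
- by exists zero; split => //; lat.
- by move=> z [q Qq qz] [s [Ss nQs zs]]; apply/nQs/(Qup q) => //; exact: le_trans zs.
exists P; split => // s Ss; split => [Ps|Qs]; last by apply: QP; exists s => //; lat.
by apply: NNPP => nQs; apply: PI Ps _; exists s; split => //; lat.
Qed.

End PrimeFilters.

Definition saturated {B : WHB_algebra} (d : B -> B -> Prop) (P : B -> Prop) :=
  forall u v, d u v -> P u -> P v.

Definition sat_equiv {B : WHB_algebra} (d : B -> B -> Prop) (x y : B) :=
  forall P, prime_filter P -> saturated d P -> (P x <-> P y).

Section Congruence.
Context {B : WHB_algebra} {S : B -> Prop} {d : B -> B -> Prop}.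
Hypothesis HS : is_subalgebra B S.
Hypothesis Hd : is_congruence_on B S d.
Implicit Types (u v w x y : B) (P Q : B -> Prop).

Lemma subalg_zero : S zero. Proof. by case: HS. Qed.

Lemma subalg_one : S one. Proof. by case: HS => _ [S1 _]. Qed.

Lemma subalg_meet {u v} : S u -> S v -> S (meet u v).
Proof. by case: HS => _ [_ Sop] Su Sv; case: (Sop u v Su Sv) => ? _. Qed.

Lemma subalg_join {u v} : S u -> S v -> S (join u v).
Proof. by case: HS => _ [_ Sop] Su Sv; case: (Sop u v Su Sv) => _ [? _]. Qed.

Lemma cong_S {u v} : d u v -> S u /\ S v. Proof. by case: Hd => dS _; exact: dS. Qed.

Lemma cong_refl {u} : S u -> d u u. Proof. by case: Hd => _ [drefl _]; exact: drefl. Qed.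

Lemma cong_sym {u v} : d u v -> d v u.
Proof. by case: Hd => _ [_ [dsym _]]; exact: dsym. Qed.

Lemma cong_trans {u v w} : d u v -> d v w -> d u w.
Proof. by case: Hd => _ [_ [_ [dtrans _]]]; exact: dtrans. Qed.

Lemma cong_meet {u u' v v'} : d u u' -> d v v' -> d (meet u v) (meet u' v').
Proof.
by case: Hd => _ [_ [_ [_ dop]]] uu' vv'; case: (dop _ _ _ _ uu' vv') => ? _.
Qed.

Lemma cong_join {u u' v v'} : d u u' -> d v v' -> d (join u v) (join u' v').
Proof.
by case: Hd => _ [_ [_ [_ dop]]] uu' vv'; case: (dop _ _ _ _ uu' vv') => _ [? _].
Qed.

Lemma cong_imp {u u' v v'} : d u u' -> d v v' -> d (imp u v) (imp u' v').
Proof.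
by case: Hd => _ [_ [_ [_ dop]]] uu' vv'; case: (dop _ _ _ _ uu' vv') => _ [_ [? _]].
Qed.

Lemma cong_coimp {u u' v v'} : d u u' -> d v v' -> d (coimp u v) (coimp u' v').
Proof.
by case: Hd => _ [_ [_ [_ dop]]] uu' vv'; case: (dop _ _ _ _ uu' vv') => _ [_ [_ ?]].
Qed.

(* [u] lies below [v] in the quotient lattice S/d. *)
Definition cong_le u v := S v /\ d (meet u v) u.

Lemma le_cong_le {u v} : S u -> S v -> le u v -> cong_le u v.
Proof. by move=> Su Sv uv; split; rewrite // uv; exact: cong_refl. Qed.

Lemma cong_le_trans {u v w} : cong_le u v -> cong_le v w -> cong_le u w.
Proof.
move=> [Sv uv] [Sw vw]; split => //; have [_ Su] := cong_S uv.
apply: cong_trans (cong_meet (cong_sym uv) (cong_refl Sw)) _.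
by rewrite -meetA; apply: cong_trans uv; exact: cong_meet (cong_refl Su) vw.
Qed.

Lemma cong_le_meet {u u' v v'} :
  cong_le u u' -> cong_le v v' -> cong_le (meet u v) (meet u' v').
Proof.
move=> [Su' uu'] [Sv' vv']; split; first exact: subalg_meet.
have -> : meet (meet u v) (meet u' v') = meet (meet u u') (meet v v') by lat_eq.
exact: cong_meet.
Qed.

Lemma cong_le_join {u u' v v'} :
  cong_le u u' -> cong_le v v' -> cong_le (join u v) (join u' v').
Proof.
move=> [Su' uu'] [Sv' vv']; split; first exact: subalg_join.
have uv_eq := cong_join (cong_sym uu') (cong_sym vv').
apply: cong_trans (cong_meet uv_eq (cong_refl (subalg_join Su' Sv'))) _.
have -> : meet (join (meet u u') (meet v v')) (join u' v') =
          join (meet u u') (meet v v') by lat_eq.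
exact: cong_sym.
Qed.

Lemma saturated_prime_separation {a b} :
  S a -> S b -> ~ d (meet a b) a ->
  exists P, [/\ prime_filter P, saturated d P, P a & ~ P b].
Proof.
move=> Sa Sb nab.
pose F := cong_le a; pose I s := S s /\ cong_le s b.
have HF : rel_filter S cong_le F.
  split=> [s [] // | s t Fs _ st | s t Fs Ft]; first exact: cong_le_trans st.
  apply: cong_le_trans (cong_le_meet Fs Ft).
  by apply: le_cong_le => //; [exact: subalg_meet|lat].
have HI : rel_ideal S cong_le I.
  split=> [s [] // | s t Ss st [_ tb] | s t [Ss sb] [St tb]].
    by split => //; exact: cong_le_trans st tb.
  split; first exact: subalg_join.
  apply: cong_le_trans (cong_le_join sb tb) _.
  by apply: le_cong_le => //; [exact: subalg_join|lat].
have FI : disjoint F I by move=> s Fs [_ sb]; apply: nab; case: (cong_le_trans Fs sb).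
have [M [FM HM]] := exists_maximal_avoiding HF FI.
have Mprime := maximal_avoiding_prime (@subalg_meet) (@subalg_join) (@le_cong_le)
  (@cong_le_trans) (@cong_le_meet) (@cong_le_join) HI HM.
case: HM => [[MS Mup Mmeet] MI _].
have [||||||P [HP PM]] := prime_filter_extension S M.
- exact: subalg_zero.
- exact: @subalg_join.
- by split=> // u v Mu Sv uv; exact: (Mup _ _ Mu Sv (le_cong_le (MS u Mu) Sv uv)).
- exact: Mprime.
- by apply: FM; apply: le_cong_le => //; [exact: subalg_one|lat].
- move=> M0; apply: MI M0 _; split; first exact: subalg_zero.
  by apply: le_cong_le => //; [exact: subalg_zero|lat].
exists P; split => //.
- move=> u v uv Pu; have [Su Sv] := cong_S uv.
  apply/(PM v Sv); apply: (Mup u v _ Sv); first exact/(PM u Su).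
  by split => //; rewrite -{2}(meetxx u); exact: cong_meet (cong_refl Su) (cong_sym uv).
- by apply/(PM a Sa); apply: FM; apply: le_cong_le => //; lat.
- move=> /(PM b Sb) Mb; apply: MI Mb _; split => //.
  by apply: le_cong_le => //; lat.
Qed.

Lemma cong_sat_equiv x y : d x y -> sat_equiv d x y.
Proof. by move=> xy P _ Psat; split; apply: Psat => //; exact: cong_sym. Qed.

Lemma sat_equiv_cong x y : S x -> S y -> sat_equiv d x y -> d x y.
Proof.
have below a b : S a -> S b -> sat_equiv d a b -> d (meet a b) a.
  move=> Sa Sb ab; apply: NNPP => nab.
  have [P [HP Psat Pa nPb]] := saturated_prime_separation Sa Sb nab.
  by apply/nPb/(ab P HP Psat).
move=> Sx Sy xy; apply: cong_trans (cong_sym (below _ _ Sx Sy xy)) _.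
by rewrite meetC; apply: below => // P HP Psat; symmetry; exact: xy.
Qed.

Lemma saturated_imp_succ {P Q} :
  prime_filter P -> saturated d P -> imp_succ P Q -> saturated d Q.
Proof.
case=> [_ P1 _ _] Psat PQ u v uv; apply: PQ; apply: Psat P1.
have [_ Sv] := cong_S uv.
by rewrite -(imp_refl B v); exact: cong_imp (cong_sym uv) (cong_refl Sv).
Qed.

Lemma saturated_coimp_succ {P Q} :
  prime_filter P -> saturated d P -> coimp_succ P Q -> saturated d Q.
Proof.
case=> [_ _ P0 _] Psat PQ u v uv Qu; apply: PQ Qu _ => Puv; apply: P0.
have [_ Sv] := cong_S uv.
by apply: Psat Puv; rewrite -(coimp_refl B v); exact: cong_coimp uv (cong_refl Sv).
Qed.

Lemma sat_equiv_sym x y : sat_equiv d x y -> sat_equiv d y x.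
Proof. by move=> xy P HP Psat; symmetry; exact: xy. Qed.

Lemma sat_equiv_imp x x' y y' :
  sat_equiv d x x' -> sat_equiv d y y' -> sat_equiv d (imp x y) (imp x' y').
Proof.
suff imp_sat_equiv x1 x2 y1 y2 P : sat_equiv d x1 x2 -> sat_equiv d y1 y2 ->
    prime_filter P -> saturated d P -> P (imp x1 y1) -> P (imp x2 y2).
  move=> xx' yy' P HP Psat; split; apply: imp_sat_equiv => //; exact: sat_equiv_sym.
move=> xx yy HP Psat Pxy; apply: NNPP => nPxy.
have [Q [HQ PQ Qx nQy]] := imp_succ_witness HP nPxy.
have Qsat := saturated_imp_succ HP Psat PQ.
by apply/nQy/(yy Q HQ Qsat)/(PQ _ _ Pxy)/(xx Q HQ Qsat).
Qed.

Lemma sat_equiv_coimp x x' y y' :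
  sat_equiv d x x' -> sat_equiv d y y' -> sat_equiv d (coimp x y) (coimp x' y').
Proof.
suff coimp_sat_equiv x1 x2 y1 y2 P : sat_equiv d x1 x2 -> sat_equiv d y1 y2 ->
    prime_filter P -> saturated d P -> P (coimp x1 y1) -> P (coimp x2 y2).
  move=> xx' yy' P HP Psat; split; apply: coimp_sat_equiv => //; exact: sat_equiv_sym.
move=> xx yy HP Psat Pxy; apply: NNPP => nPxy.
have [Q [HQ PQ Qx nQy]] := coimp_succ_witness HP Pxy.
have Qsat := saturated_coimp_succ HP Psat PQ.
by apply/nQy/(yy Q HQ Qsat)/(PQ _ _ _ nPxy)/(xx Q HQ Qsat).
Qed.

Lemma sat_equiv_congruence : is_congruence B (sat_equiv d).
Proof.
split; first by [].
split; first by move=> x _ P.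
split; first exact: sat_equiv_sym.
split; first by move=> x y z xy yz P HP Psat; rewrite (xy P HP Psat); exact: yz.
move=> x x' y y' xx' yy'; split; [|split; [|split]].
- move=> P HP Psat; rewrite !prime_filterIE //.
  by rewrite (xx' P HP Psat) (yy' P HP Psat).
- move=> P HP Psat; rewrite !prime_filterUE //.
  by rewrite (xx' P HP Psat) (yy' P HP Psat).
- exact: sat_equiv_imp.
- exact: sat_equiv_coimp.
Qed.

End Congruence.

Theorem corollary6p28 :
  forall (B : WHB_algebra) (S : B -> Prop) (d : B -> B -> Prop),
    is_subalgebra B S ->
    is_congruence_on B S d ->
    exists t : B -> B -> Prop,
      is_congruence B t /\
      (forall x y, d x y <-> (S x /\ S y /\ t x y)).
Proof.
move=> B S d HS Hd; exists (sat_equiv d); split; first exact: sat_equiv_congruence Hd.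
move=> x y; split=> [xy|[Sx [Sy xy]]]; last exact: sat_equiv_cong HS Hd x y Sx Sy xy.
have [Sx Sy] := cong_S Hd xy.
by split; [|split; last exact: cong_sat_equiv Hd x y xy].
Qed.
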